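(* In a Gaussian layered relay network with layers $0,1,\dots,L$ (as in the context) operating the amplify-and-forward scheme under the individual power constraints $E[x_k^2]\le P_k^{Up}$ at every relay $k$, the optimal achievable rate $R_{opt}$ satisfies $$R_{opt}\le \min_{l_0=1,2,\dots,L}\ \frac12\log_2\Big(1+\sum_{k\in\mathcal L_{l_0}}P_{R,k}\Big).$$
   Context: Layer $\mathcal L_0=\{S\}$ contains the source, layer $\mathcal L_L=\{D\}$ the destination, and layers $\mathcal L_1,\dots,\mathcal L_{L-1}$ contain relay nodes. Every node $k\in\mathcal L_{l+1}$ receives $y_k=\sum_{j\in\mathcal L_l}h_{j,k}x_j+z_k$, where all channel gains $h_{j,k}$ are fixed positive reals, $x_j$ is the signal sent by node $j$, and the noises $z_k\sim\mathcal N(0,1)$ are independent across non-source nodes and independent of the source signal. The source sends Gaussian codewords with input $x_S\sim\mathcal N(0,P_S)$, $P_S\le P_S^{Up}$. Each relay $k$ transmits $x_k=\beta_k y_k$ with a real amplification gain $\beta_k$ (instantaneous relaying), and the gains must satisfy the power constraints $E[x_k^2]\le P_k^{Up}$. By linearity, $y_D=f_{S,D}x_S+\sum_{j\text{ relay}}f_{j,D}z_j+z_D$ for real coefficients determined by the gains and channel gains, and the achievable rate of a gain choice is $\frac12\log_2\big(1+f_{S,D}^2P_S/(\sum_j f_{j,D}^2+1)\big)$; $R_{opt}$ is the supremum of this rate over all gain choices satisfying the power constraints. For every node $k$ in layer $l\ge1$, $P_{R,k}=\big(\sum_{j\in\mathcal L_{l-1}}h_{j,k}\sqrt{P_j^{Up}}\big)^2$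 (with $P_S^{Up}$ used for the source). *)

From Stdlib Require Import Reals Arith.
From Coquelicot Require Import Coquelicot.
Open Scope R_scope.

(* Layered network description.
   - layers 0..L; layer l has [n l] nodes, indexed 0 .. n l - 1;
   - layer 0 = {S} (n 0 = 1, S = node 0), layer L = {D} (n L = 1, D = node 0);
   - [h l j k] = channel gain from node j of layer l to node k of layer l+1;
   - [PUp l j] = power upper bound P^Up of node j of layer l (l < L);
   - [beta l k] = amplification gain of relay k of layer l (1 <= l <= L-1). *)

Fixpoint sumR (m : nat) (f : nat -> R) : R :=
  match m with
  | O => 0
  | S m' => sumR m' f + f m'
  end.

Section Network.
Variables (n : nat -> nat) (h : nat -> nat -> nat -> R) (beta : nat -> nat -> R).

(* Coefficient of x_S in the transmitted signal x_{l,j}. *)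
Fixpoint txS (l j : nat) : R :=
  match l with
  | O => 1
  | S l' => beta (S l') j * sumR (n l') (fun a => h l' a j * txS l' a)
  end.

(* Coefficient of x_S in the received signal y_{l,k} (l >= 1). *)
Definition rxS (l k : nat) : R :=
  match l with
  | O => 0
  | S l' => sumR (n l') (fun a => h l' a k * txS l' a)
  end.

(* Indicator that the noise z_{m,i} is the noise of node (l,k). *)
Definition noise_ind (m i l k : nat) : R :=
  if andb (Nat.eqb l m) (Nat.eqb k i) then 1 else 0.

(* Coefficient of the noise z_{m,i} in the transmitted signal x_{l,j}. *)
Fixpoint txN (m i l j : nat) : R :=
  match l with
  | O => 0
  | S l' => beta (S l') j *
            (sumR (n l') (fun a => h l' a j * txN m i l' a) + noise_ind m i (S l') j)
  end.

(* Coefficient of the noise z_{m,i} in the received signal y_{l,k} (l >= 1). *)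
Definition rxN (m i l k : nat) : R :=
  match l with
  | O => 0
  | S l' => sumR (n l') (fun a => h l' a k * txN m i l' a) + noise_ind m i l k
  end.

(* Sum of squared coefficients of the relay noises z_{m,i}, 1 <= m <= M,
   in y_{l,k}. *)
Definition noise_energy (M l k : nat) : R :=
  sumR (S M) (fun m => if Nat.eqb m 0 then 0
                       else sumR (n m) (fun i => (rxN m i l k) ^ 2)).

(* E[x_{l,k}^2] for relay (l,k): x = beta * y, with x_S ~ N(0,PS) and
   independent unit-variance noises. *)
Definition relay_power (PS : R) (l k : nat) : R :=
  (beta l k) ^ 2 * ((rxS l k) ^ 2 * PS + noise_energy l l k).

End Network.

Definition log2 (x : R) : R := ln x / ln 2.

Definition feasible (L : nat) (n : nat -> nat) (h : nat -> nat -> nat -> R)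
  (PUp : nat -> nat -> R) (PS : R) (beta : nat -> nat -> R) : Prop :=
  forall l k, (1 <= l)%nat -> (l < L)%nat -> (k < n l)%nat ->
    relay_power n h beta PS l k <= PUp l k.

(* Achievable rate of a gain choice:
   y_D = f_{S,D} x_S + sum_{relays j} f_{j,D} z_j + z_D. *)
Definition AF_rate (L : nat) (n : nat -> nat) (h : nat -> nat -> nat -> R)
  (PS : R) (beta : nat -> nat -> R) : R :=
  / 2 * log2 (1 + (rxS n h beta L 0) ^ 2 * PS
                  / (noise_energy n h beta (L - 1) L 0 + 1)).

Definition R_opt (L : nat) (n : nat -> nat) (h : nat -> nat -> nat -> R)
  (PUp : nat -> nat -> R) (PS : R) : Rbar :=
  Lub_Rbar (fun r => exists beta, feasible L n h PUp PS beta /\ r = AF_rate L n h PS beta).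

Definition P_R (n : nat -> nat) (h : nat -> nat -> nat -> R)
  (PUp : nat -> nat -> R) (l k : nat) : R :=
  (sumR (n (pred l)) (fun j => h (pred l) j k * sqrt (PUp (pred l) j))) ^ 2.

Definition layer_bound (n : nat -> nat) (h : nat -> nat -> nat -> R)
  (PUp : nat -> nat -> R) (l0 : nat) : R :=
  / 2 * log2 (1 + sumR (n l0) (fun k => P_R n h PUp l0 k)).

(* min_{l = 1..m} f l  (for m >= 1; value f 1 for m = 0, never used). *)
Fixpoint min_1_to (m : nat) (f : nat -> R) : R :=
  match m with
  | O => f 1%nat
  | S m' => match m' with
            | O => f 1%nat
            | S _ => Rmin (min_1_to m' f) (f m)
            end
  end.

From Stdlib Require Import Reals Arith Lra Lia Psatz.
From Coquelicot Require Import Coquelicot.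
Open Scope R_scope.

(* Every transmitted signal obeys
   |coefficient of x_S| * sqrt PS <= sqrt P^Up, so by the triangle inequality
   (gains h positive) the signal coefficient g_k of y_{l0,k} satisfies
   g_k^2 PS <= P_{R,k}.  By linearity the destination sees x_S through layer
   l0 only: f_{S,D} = sum_k c_k g_k, where c_k is also the coefficient of the
   noise z_{l0,k} in y_D.  Cauchy-Schwarz then gives
   f_{S,D}^2 <= (sum_k c_k^2) (sum_k g_k^2) <= (N + 1) sum_k g_k^2, with N the
   total relay-noise energy at D, so the SNR is at most sum_k P_{R,k}. *)

Lemma sumR_ext m f g : (forall k, (k < m)%nat -> f k = g k) -> sumR m f = sumR m g.
Proof.
  induction m as [|m IH]; intros H; simpl; [reflexivity|].
  rewrite IH by (intros; apply H; lia). rewrite H by lia. reflexivity.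
Qed.

Lemma sumR_le m f g : (forall k, (k < m)%nat -> f k <= g k) -> sumR m f <= sumR m g.
Proof.
  induction m as [|m IH]; intros H; simpl; [lra|].
  assert (sumR m f <= sumR m g) by (apply IH; intros; apply H; lia).
  assert (f m <= g m) by (apply H; lia). lra.
Qed.

Lemma sumR_0 m : sumR m (fun _ => 0) = 0.
Proof. induction m as [|m IH]; simpl; [reflexivity|]. rewrite IH; ring. Qed.

Lemma sumR_ge0 m f : (forall k, (k < m)%nat -> 0 <= f k) -> 0 <= sumR m f.
Proof. intros H. rewrite <- (sumR_0 m). apply sumR_le, H. Qed.

Lemma sumR_distrr c m f : c * sumR m f = sumR m (fun k => c * f k).
Proof. induction m as [|m IH]; simpl; [ring|]. rewrite <- IH. ring. Qed.

Lemma sumR_distrl c m f : sumR m f * c = sumR m (fun k => f k * c).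
Proof. induction m as [|m IH]; simpl; [ring|]. rewrite <- IH. ring. Qed.

Lemma sumR_add m f g : sumR m (fun k => f k + g k) = sumR m f + sumR m g.
Proof. induction m as [|m IH]; simpl; [ring|]. rewrite IH. ring. Qed.

Lemma sumR_exchange m p F :
  sumR m (fun a => sumR p (fun k => F a k)) = sumR p (fun k => sumR m (fun a => F a k)).
Proof.
  induction m as [|m IH]; simpl; [now rewrite sumR_0|].
  rewrite IH, <- sumR_add. reflexivity.
Qed.

Lemma Rabs_sumR_le m f : Rabs (sumR m f) <= sumR m (fun k => Rabs (f k)).
Proof.
  induction m as [|m IH]; simpl; [rewrite Rabs_R0; lra|].
  eapply Rle_trans; [apply Rabs_triang|lra].
Qed.

Lemma sumR_kronecker m j F :
  (j < m)%nat -> sumR m (fun k => (if Nat.eqb j k then 1 else 0) * F k) = F j.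
Proof.
  induction m as [|m IH]; intros Hj; simpl; [lia|].
  destruct (Nat.eq_dec j m) as [->|Hne].
  - rewrite Nat.eqb_refl, (sumR_ext _ _ (fun _ => 0)), sumR_0; [ring|].
    intros k Hk. destruct (Nat.eqb_spec m k); [lia|ring].
  - rewrite IH by lia. destruct (Nat.eqb_spec j m); [lia|ring].
Qed.

Lemma sumR_term_le M F j : (forall m, 0 <= F m) -> (j < M)%nat -> F j <= sumR M F.
Proof.
  induction M as [|M IH]; intros HF Hj; simpl; [lia|].
  destruct (Nat.eq_dec j M) as [->|Hne].
  - assert (0 <= sumR M F) by (apply sumR_ge0; auto). lra.
  - assert (F j <= sumR M F) by (apply IH; auto; lia). specialize (HF M). lra.
Qed.

Lemma double_le_add_of_sqr_le s a b : 0 <= a -> 0 <= b -> s ^ 2 <= a * b -> 2 * s <= a + b.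
Proof.
  intros Ha Hb Hs.
  assert (Hsq : (2 * s) ^ 2 <= (a + b) ^ 2) by (pose proof (pow2_ge_0 (a - b)); nra).
  destruct (Rle_or_lt (2 * s) (a + b)) as [|Hlt]; [assumption|nra].
Qed.

Lemma sumR_Cauchy_Schwarz m c g :
  (sumR m (fun k => c k * g k)) ^ 2
  <= sumR m (fun k => c k ^ 2) * sumR m (fun k => g k ^ 2).
Proof.
  induction m as [|m IH]; cbn [sumR]; [lra|].
  set (S := sumR m (fun k => c k * g k)) in *.
  set (A := sumR m (fun k => c k ^ 2)) in *.
  set (B := sumR m (fun k => g k ^ 2)) in *.
  assert (HA : 0 <= A) by (apply sumR_ge0; intros; nra).
  assert (HB : 0 <= B) by (apply sumR_ge0; intros; nra).
  assert (Hcross : 2 * (S * c m * g m) <= A * g m ^ 2 + B * c m ^ 2).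
  { apply double_le_add_of_sqr_le; try nra.
    replace ((S * c m * g m) ^ 2) with (S ^ 2 * (c m ^ 2 * g m ^ 2)) by ring.
    replace (A * g m ^ 2 * (B * c m ^ 2)) with (A * B * (c m ^ 2 * g m ^ 2)) by ring.
    apply Rmult_le_compat_r; [nra|exact IH]. }
  nra.
Qed.

Lemma abs_mul_sqrt_le x p P : 0 <= p -> x ^ 2 * p <= P -> Rabs x * sqrt p <= sqrt P.
Proof.
  intros Hp HP.
  rewrite <- (sqrt_pow2 (Rabs x)), <- sqrt_mult_alt, pow2_abs by (auto using Rabs_pos, pow2_ge_0).
  apply sqrt_le_1_alt, HP.
Qed.

Lemma sqr_mul_le_of_abs_mul_sqrt_le x p T :
  0 <= p -> Rabs x * sqrt p <= T -> x ^ 2 * p <= T ^ 2.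
Proof.
  intros Hp HT.
  assert (0 <= Rabs x * sqrt p) by (apply Rmult_le_pos; [apply Rabs_pos|apply sqrt_pos]).
  replace (x ^ 2 * p) with ((Rabs x * sqrt p) ^ 2)
    by (rewrite Rpow_mult_distr, pow2_abs, pow2_sqrt by exact Hp; reflexivity).
  apply pow_incr; auto.
Qed.

Lemma half_log2_1p_le x y : 0 <= x -> x <= y -> / 2 * log2 (1 + x) <= / 2 * log2 (1 + y).
Proof.
  intros Hx Hxy. unfold log2, Rdiv.
  apply Rmult_le_compat_l; [lra|]. apply Rmult_le_compat_r.
  - left. apply Rinv_0_lt_compat. rewrite <- ln_1. apply ln_increasing; lra.
  - apply ln_le; lra.
Qed.

Lemma noise_energy_ge0 n h beta M l k : 0 <= noise_energy n h beta M l k.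
Proof.
  apply sumR_ge0. intros m _. destruct (Nat.eqb m 0); [lra|].
  apply sumR_ge0. intros; apply pow2_ge_0.
Qed.

Lemma noise_energy_ge_layer n h beta M l k l0 : (1 <= l0)%nat -> (l0 <= M)%nat ->
  sumR (n l0) (fun i => rxN n h beta l0 i l k ^ 2) <= noise_energy n h beta M l k.
Proof.
  intros H1 H2. unfold noise_energy.
  set (F := fun m => if Nat.eqb m 0 then 0 else sumR (n m) (fun i => rxN n h beta m i l k ^ 2)).
  replace (sumR (n l0) _) with (F l0)
    by (unfold F; replace (Nat.eqb l0 0) with false by (symmetry; apply Nat.eqb_neq; lia);
        reflexivity).
  apply sumR_term_le; [|lia].
  intros m. unfold F. destruct (Nat.eqb m 0); [lra|].
  apply sumR_ge0. intros; apply pow2_ge_0.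
Qed.

Section Linearity.
Variables (n : nat -> nat) (h : nat -> nat -> nat -> R) (beta : nat -> nat -> R).

Lemma noise_ind_neq m i l k : l <> m -> noise_ind m i l k = 0.
Proof. intros H. unfold noise_ind. now replace (Nat.eqb l m) with false by (symmetry; apply Nat.eqb_neq; lia). Qed.

Lemma txN_before m i l j : (l < m)%nat -> txN n h beta m i l j = 0.
Proof.
  revert j; induction l as [|l IH]; intros j Hl; cbn [txN]; [reflexivity|].
  rewrite (sumR_ext _ _ (fun _ => 0)) by (intros; rewrite IH by lia; ring).
  rewrite sumR_0, noise_ind_neq by lia. ring.
Qed.

(* x_S reaches layer l0 + d only through the received signals of layer l0,
   with the same weights as the noises z_{l0,k}. *)
Lemma txS_layer_decomp l0 d j : (1 <= l0)%nat -> (j < n (l0 + d))%nat ->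
  txS n h beta (l0 + d) j
  = sumR (n l0) (fun k => txN n h beta l0 k (l0 + d) j * rxS n h beta l0 k).
Proof.
  intros Hl0. revert j. induction d as [|d IH]; intros j Hj.
  - rewrite Nat.add_0_r in *. destruct l0 as [|p]; [lia|].
    change (txS n h beta (S p) j) with (beta (S p) j * rxS n h beta (S p) j).
    rewrite <- (sumR_kronecker (n (S p)) j (fun k => beta (S p) j * rxS n h beta (S p) k)) by exact Hj.
    apply sumR_ext. intros k Hk. cbn [txN].
    rewrite (sumR_ext _ _ (fun _ => 0)) by (intros; rewrite txN_before by lia; ring).
    rewrite sumR_0. unfold noise_ind. rewrite Nat.eqb_refl. simpl.
    destruct (Nat.eqb_spec j k); subst; ring.
  - rewrite Nat.add_succ_r in *. cbn [txS txN].
    rewrite (sumR_ext _ _ (fun a => sumR (n l0) (fun k =>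
               h (l0 + d)%nat a j * txN n h beta l0 k (l0 + d) a * rxS n h beta l0 k))).
    2:{ intros a Ha. rewrite IH, sumR_distrr by exact Ha. apply sumR_ext; intros; ring. }
    rewrite sumR_exchange, sumR_distrr. apply sumR_ext. intros k Hk.
    rewrite noise_ind_neq, Rplus_0_r, Rmult_assoc, sumR_distrl by lia. reflexivity.
Qed.

Lemma rxS_layer_decomp l0 l k : (1 <= l0)%nat -> (l0 < l)%nat ->
  rxS n h beta l k = sumR (n l0) (fun i => rxN n h beta l0 i l k * rxS n h beta l0 i).
Proof.
  intros H1 H2. destruct l as [|q]; [lia|]. cbn [rxS rxN].
  replace q with (l0 + (q - l0))%nat by lia. set (d := (q - l0)%nat).
  rewrite (sumR_ext _ _ (fun a => sumR (n l0) (fun i =>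
             h (l0 + d)%nat a k * txN n h beta l0 i (l0 + d) a * rxS n h beta l0 i))).
  2:{ intros a Ha. rewrite txS_layer_decomp, sumR_distrr by auto. apply sumR_ext; intros; ring. }
  rewrite sumR_exchange. apply sumR_ext. intros i Hi.
  rewrite noise_ind_neq, Rplus_0_r, sumR_distrl by lia. reflexivity.
Qed.

Lemma dest_gain_sqr_le L l0 : n L = 1%nat -> (1 <= l0)%nat -> (l0 <= L)%nat ->
  rxS n h beta L 0 ^ 2
  <= (noise_energy n h beta (L - 1) L 0 + 1) * sumR (n l0) (fun k => rxS n h beta l0 k ^ 2).
Proof.
  intros HnL H1 H2.
  set (N := noise_energy n h beta (L - 1) L 0).
  set (G := sumR (n l0) (fun k => rxS n h beta l0 k ^ 2)).
  assert (HN : 0 <= N) by apply noise_energy_ge0.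
  assert (HG : 0 <= G) by (apply sumR_ge0; intros; apply pow2_ge_0).
  destruct (Nat.eq_dec l0 L) as [->|Hne].
  - unfold G. rewrite HnL. cbn [sumR]. nra.
  - assert (HCS := sumR_Cauchy_Schwarz (n l0) (fun i => rxN n h beta l0 i L 0)
                                             (fun i => rxS n h beta l0 i)).
    cbv beta in HCS. rewrite <- rxS_layer_decomp in HCS by lia. fold G in HCS.
    assert (sumR (n l0) (fun i => rxN n h beta l0 i L 0 ^ 2) <= N)
      by (apply noise_energy_ge_layer; lia).
    nra.
Qed.

End Linearity.

Section PowerConstraints.
Variables (L : nat) (n : nat -> nat) (h : nat -> nat -> nat -> R)
  (PUp : nat -> nat -> R) (PS : R) (beta : nat -> nat -> R).
Hypotheses (Hn0 : n 0%nat = 1%nat)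
  (Hh : forall l j k, (l < L)%nat -> (j < n l)%nat -> (k < n (S l))%nat -> 0 < h l j k)
  (HPS0 : 0 <= PS) (HPS : PS <= PUp 0%nat 0%nat)
  (Hfeas : feasible L n h PUp PS beta).

Lemma txS_abs_bound l a : (l < L)%nat -> (a < n l)%nat ->
  Rabs (txS n h beta l a) * sqrt PS <= sqrt (PUp l a).
Proof.
  intros Hl Ha. apply abs_mul_sqrt_le; [exact HPS0|].
  destruct l as [|p].
  - cbn [txS]. rewrite Hn0 in Ha. replace a with 0%nat by lia. lra.
  - assert (Hp := Hfeas (S p) a ltac:(lia) Hl Ha). unfold relay_power in Hp.
    assert (0 <= beta (S p) a ^ 2 * noise_energy n h beta (S p) (S p) a)
      by (apply Rmult_le_pos; [apply pow2_ge_0|apply noise_energy_ge0]).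
    change (txS n h beta (S p) a) with (beta (S p) a * rxS n h beta (S p) a).
    nra.
Qed.

Lemma rxS_power_le_P_R l0 k : (1 <= l0)%nat -> (l0 <= L)%nat -> (k < n l0)%nat ->
  rxS n h beta l0 k ^ 2 * PS <= P_R n h PUp l0 k.
Proof.
  intros H1 H2 Hk. destruct l0 as [|p]; [lia|]. unfold P_R. cbn [pred rxS].
  apply sqr_mul_le_of_abs_mul_sqrt_le; [exact HPS0|].
  eapply Rle_trans; [apply Rmult_le_compat_r; [apply sqrt_pos|apply Rabs_sumR_le]|].
  rewrite sumR_distrl. apply sumR_le. intros a Ha.
  assert (0 < h p a k) by (apply Hh; lia).
  rewrite Rabs_mult, (Rabs_pos_eq (h p a k)), Rmult_assoc by lra.
  apply Rmult_le_compat_l; [lra|]. apply txS_abs_bound; lia.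
Qed.

Lemma AF_rate_le_layer_bound l0 : n L = 1%nat -> (1 <= l0)%nat -> (l0 <= L)%nat ->
  AF_rate L n h PS beta <= layer_bound n h PUp l0.
Proof.
  intros HnL H1 H2. unfold AF_rate, layer_bound.
  set (N := noise_energy n h beta (L - 1) L 0).
  set (G := sumR (n l0) (fun k => rxS n h beta l0 k ^ 2)).
  assert (HN : 0 <= N) by apply noise_energy_ge0.
  assert (HG : 0 <= G) by (apply sumR_ge0; intros; apply pow2_ge_0).
  assert (Hgain := dest_gain_sqr_le n h beta L l0 HnL H1 H2). fold N G in Hgain.
  assert (Hsig : G * PS <= sumR (n l0) (fun k => P_R n h PUp l0 k)).
  { unfold G. rewrite sumR_distrl. apply sumR_le. intros; apply rxS_power_le_P_R; lia. }
  assert (Hf2 : 0 <= rxS n h beta L 0 ^ 2 * PS) by (apply Rmult_le_pos; [apply pow2_ge_0|exact HPS0]).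
  apply half_log2_1p_le.
  - apply Rdiv_le_0_compat; lra.
  - apply Rle_trans with (G * PS); [|exact Hsig].
    apply Rle_div_l; [lra|]. nra.
Qed.

End PowerConstraints.

Lemma min_1_to_glb r f m : (1 <= m)%nat ->
  (forall l, (1 <= l)%nat -> (l <= m)%nat -> r <= f l) -> r <= min_1_to m f.
Proof.
  induction m as [|m IH]; intros Hm H; [lia|].
  destruct m as [|m']; [apply H; lia|].
  change (min_1_to (S (S m')) f) with (Rmin (min_1_to (S m') f) (f (S (S m')))).
  apply Rmin_glb; [apply IH; [lia|]; intros; apply H; lia | apply H; lia].
Qed.

Theorem theorem1
  (L : nat) (n : nat -> nat) (h : nat -> nat -> nat -> R)
  (PUp : nat -> nat -> R) (PS : R)
  (HL : (1 <= L)%nat)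
  (Hn0 : n 0%nat = 1%nat) (HnL : n L = 1%nat)
  (Hnrel : forall l, (1 <= l)%nat -> (l < L)%nat -> (1 <= n l)%nat)
  (Hh : forall l j k, (l < L)%nat -> (j < n l)%nat -> (k < n (S l))%nat -> 0 < h l j k)
  (HPS0 : 0 <= PS) (HPS : PS <= PUp 0%nat 0%nat) :
  Rbar_le (R_opt L n h PUp PS)
          (Finite (min_1_to L (fun l0 => layer_bound n h PUp l0))).
Proof.
  unfold R_opt.
  destruct (Lub_Rbar_correct (fun r => exists beta,
              feasible L n h PUp PS beta /\ r = AF_rate L n h PS beta)) as [_ Hlub].
  apply Hlub. intros r [beta [Hfeas ->]]. simpl.
  apply min_1_to_glb; [exact HL|]. intros l0 H1 H2.
  now apply (AF_rate_le_layer_bound L n h PUp PS beta).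
Qed.
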